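(* The following are derivable in $\mathrm{CL}^{\mathrm{FI}}$. (i) For all $C\subseteq N$, $\varphi\in\mathcal{L}_{\mathrm{CL}^{\mathrm{FI}}}$: $\vdash\mathrm{FI}_C(\varphi)\leftrightarrow\mathrm{FI}_C(\neg\varphi)$. (ii) For all $C\subseteq D\subseteq N$ and $\varphi$: $\vdash\mathrm{FI}_D(\varphi)\to\mathrm{FI}_C(\varphi)$. (iii) If $\varphi$ is a formula with $\vdash_{\mathrm{CL}}[N]\varphi\vee[N]\neg\varphi$, then $\vdash_{\mathrm{CL}^{\mathrm{FI}}}\neg\mathrm{FI}_N(\varphi)$. (iv) For all $C\subseteq N$ and formulas $\varphi,\chi,\psi$: if $\vdash_{\mathrm{CL}^{\mathrm{FI}}}\varphi\to\chi$ and $\vdash_{\mathrm{CL}^{\mathrm{FI}}}\chi\to\psi$, then $\vdash_{\mathrm{CL}^{\mathrm{FI}}}(\mathrm{FI}_C(\varphi)\wedge\mathrm{FI}_C(\psi))\to\mathrm{FI}_C(\chi)$.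
   Context: $N=\{1,\dots,n\}$ is a finite set of agents, $\mathrm{Prop}$ a countable set of atoms. $\mathcal{L}_{\mathrm{CL}}$: $\varphi ::= p\mid\neg\varphi\mid(\varphi\wedge\psi)\mid[C]\varphi$; $\mathcal{L}_{\mathrm{CL}^{\mathrm{FI}}}$ additionally has $\mathrm{FI}_C(\varphi)$ for $C\subseteq N$ as a primitive modality. Coalition Logic $\mathrm{CL}$ (Pauly's axiomatization) over $\mathcal{L}_{\mathrm{CL}}$ has: all propositional tautologies; $(\bot)$ $\neg[C]\bot$; $(\top)$ $[C]\top$; $(N)$ $\neg[\emptyset]\neg\varphi\to[N]\varphi$; $(M)$ $[C](\varphi\wedge\psi)\to[C]\varphi$; $(S)$ $[C_1]\varphi_1\wedge[C_2]\varphi_2\to[C_1\cup C_2](\varphi_1\wedge\varphi_2)$ for $C_1\cap C_2=\emptyset$; rules modus ponens and (RE) from $\varphi\leftrightarrow\psi$ infer $[C]\varphi\leftrightarrow[C]\psi$. The system $\mathrm{CL}^{\mathrm{FI}}$ consists of all these axiom schemes and rules instantiated over $\mathcal{L}_{\mathrm{CL}^{\mathrm{FI}}}$, plus the axiom $(\mathrm{Def}\text{-}\mathrm{FI})$: $\mathrm{FI}_C(\varphi)\leftrightarrow(\neg[C]\varphi\wedge\neg[C]\neg\varphi)$. *)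

From mathcomp Require Import all_boot.
Set Implicit Arguments. Unset Strict Implicit. Unset Printing Implicit Defensive.

Section Logic.
Variable n : nat.
Definition coalition := {set 'I_n}.
Definition allN : coalition := setT.

Inductive clform : Type :=
| CAtom : nat -> clform
| CNeg  : clform -> clform
| CAnd  : clform -> clform -> clform
| CBox  : coalition -> clform -> clform.

Definition COr a b := CNeg (CAnd (CNeg a) (CNeg b)).
Definition CImp a b := CNeg (CAnd a (CNeg b)).
Definition CIff a b := CAnd (CImp a b) (CImp b a).
Definition CTop := CNeg (CAnd (CAtom 0) (CNeg (CAtom 0))).
Definition CBot := CNeg CTop.

(* propositional evaluation treating atoms and modal formulas as atoms *)
Fixpoint cpeval (v : clform -> bool) (f : clform) : bool :=
  match f with
  | CAtom p => v (CAtom p)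
  | CNeg a => ~~ cpeval v a
  | CAnd a b => cpeval v a && cpeval v b
  | CBox C a => v (CBox C a)
  end.
Definition ctaut (f : clform) := forall v, cpeval v f = true.

(* Pauly's axiomatization of CL *)
Inductive provCL : clform -> Prop :=
| CL_taut f : ctaut f -> provCL f
| CL_bot C : provCL (CNeg (CBox C CBot))
| CL_top C : provCL (CBox C CTop)
| CL_N f : provCL (CImp (CNeg (CBox set0 (CNeg f))) (CBox allN f))
| CL_M C f g : provCL (CImp (CBox C (CAnd f g)) (CBox C f))
| CL_S C1 C2 f1 f2 : C1 :&: C2 = set0 ->
    provCL (CImp (CAnd (CBox C1 f1) (CBox C2 f2)) (CBox (C1 :|: C2) (CAnd f1 f2)))
| CL_MP f g : provCL (CImp f g) -> provCL f -> provCL g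
| CL_RE C f g : provCL (CIff f g) -> provCL (CIff (CBox C f) (CBox C g)).

Inductive form : Type :=
| Atom : nat -> form
| Neg  : form -> form
| And  : form -> form -> form
| Box  : coalition -> form -> form
| FI   : coalition -> form -> form.

Definition Or a b := Neg (And (Neg a) (Neg b)).
Definition Imp a b := Neg (And a (Neg b)).
Definition Iff a b := And (Imp a b) (Imp b a).
Definition Top := Neg (And (Atom 0) (Neg (Atom 0))).
Definition Bot := Neg Top.

Fixpoint peval (v : form -> bool) (f : form) : bool :=
  match f with
  | Atom p => v (Atom p)
  | Neg a => ~~ peval v a
  | And a b => peval v a && peval v b
  | Box C a => v (Box C a)
  | FI C a => v (FI C a)
  end.
Definition taut (f : form) := forall v, peval v f = true.

Inductive provFI : form -> Prop :=
| FI_taut f : taut f -> provFI f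
| FI_bot C : provFI (Neg (Box C Bot))
| FI_top C : provFI (Box C Top)
| FI_N f : provFI (Imp (Neg (Box set0 (Neg f))) (Box allN f))
| FI_M C f g : provFI (Imp (Box C (And f g)) (Box C f))
| FI_S C1 C2 f1 f2 : C1 :&: C2 = set0 ->
    provFI (Imp (And (Box C1 f1) (Box C2 f2)) (Box (C1 :|: C2) (And f1 f2)))
| FI_Def C f : provFI (Iff (FI C f) (And (Neg (Box C f)) (Neg (Box C (Neg f)))))
| FI_MP f g : provFI (Imp f g) -> provFI f -> provFI g
| FI_RE C f g : provFI (Iff f g) -> provFI (Iff (Box C f) (Box C g)).

Fixpoint embed (f : clform) : form :=
  match f with
  | CAtom p => Atom p
  | CNeg a => Neg (embed a)
  | CAnd a b => And (embed a) (embed b)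
  | CBox C a => Box C (embed a)
  end.

End Logic.

From mathcomp Require Import all_boot.

Set Implicit Arguments.

(* FI_C(phi) says that C can force neither phi nor its negation.  Since
   [C] is monotone both in its argument (rule RM, from M and RE) and in the
   coalition (axiom S applied to [C]phi and [D \ C]Top), these two
   non-abilities propagate to weaker coalitions and to every chi sandwiched
   between phi and psi: [C]chi would give [C]psi, and [C](~chi) would give
   [C](~phi).  Symmetry under negation is RE applied to ~~phi <-> phi, and
   the determinacy claim transfers from CL along the embedding of L_CL. *)

Ltac decide_taut :=
  let v := fresh "v" in
  move=> v /=;
  repeat match goal with
  | |- context [v ?x] => case: (v x) => //
  | |- context [peval v ?x] => case: (peval v x) => //
  end.

Section CLFI.
Variable n : nat.
Implicit Types (C D : {set 'I_n}) (f g h k : form n).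

Lemma provFI_taut1 f g : provFI f -> taut (Imp f g) -> provFI g.
Proof. by move=> pf t; apply: FI_MP (FI_taut t) pf. Qed.

Lemma provFI_taut2 f g h :
  provFI f -> provFI g -> taut (Imp f (Imp g h)) -> provFI h.
Proof. by move=> pf pg t; apply: FI_MP pg; apply: provFI_taut1 pf t. Qed.

Lemma provFI_taut3 f g h k : provFI f -> provFI g -> provFI h ->
  taut (Imp f (Imp g (Imp h k))) -> provFI k.
Proof. by move=> pf pg ph t; apply: FI_MP ph; apply: provFI_taut2 pf pg t. Qed.

Lemma provFI_and f g : provFI f -> provFI g -> provFI (And f g).
Proof. by move=> pf pg; apply: provFI_taut2 pf pg _; decide_taut. Qed.

Lemma Box_mono C f g : provFI (Imp f g) -> provFI (Imp (Box C f) (Box C g)).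
Proof.
move=> pfg.
have f_gf : provFI (Iff f (And g f)) by apply: provFI_taut1 pfg _; decide_taut.
apply: provFI_taut2 (FI_RE C f_gf) (FI_M C g f) _; decide_taut.
Qed.

Lemma Box_subset C D f : C \subset D -> provFI (Imp (Box C f) (Box D f)).
Proof.
move=> sCD.
have disj : C :&: (D :\: C) = set0 by rewrite setDE setICA setICr setI0.
have cover : C :|: (D :\: C) = D.
  by rewrite setDE setUIr setUCr setIT (setUidPr sCD).
have superadd := FI_S f (Top n) disj; rewrite cover in superadd.
have fTop : provFI (Iff (Box D (And f (Top n))) (Box D f)).
  by apply: FI_RE; apply: FI_taut; decide_taut.
apply: provFI_taut3 superadd fTop (FI_top (D :\: C)) _; decide_taut.
Qed.

Lemma peval_embed (v : form n -> bool) (f : clform n) :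
  cpeval (fun x => v (embed x)) f = peval v (embed f).
Proof. by elim: f => //= [a -> | a -> b ->]. Qed.

Lemma provFI_embed (f : clform n) : provCL f -> provFI (embed f).
Proof.
elim=> /= [g tg | C | C | g | C g h | C1 C2 f1 f2 disj | g h _ pgh _ pg |
  C g h _ pgh].
- by apply: FI_taut => v; rewrite -peval_embed.
- exact: FI_bot.
- exact: FI_top.
- exact: FI_N.
- exact: FI_M.
- exact: FI_S.
- exact: FI_MP pgh pg.
- exact: FI_RE.
Qed.

Lemma FI_NegE C f : provFI (Iff (FI C f) (FI C (Neg f))).
Proof.
have nnf : provFI (Iff (Box C (Neg (Neg f))) (Box C f)).
  by apply: FI_RE; apply: FI_taut; decide_taut.
apply: provFI_taut3 (FI_Def C f) (FI_Def C (Neg f)) nnf _; decide_taut.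
Qed.

Lemma FI_subset C D f : C \subset D -> provFI (Imp (FI D f) (FI C f)).
Proof.
move=> sCD.
have mono := provFI_and (Box_subset f sCD) (Box_subset (Neg f) sCD).
apply: provFI_taut2 mono (provFI_and (FI_Def D f) (FI_Def C f)) _.
decide_taut.
Qed.

Lemma not_FI_allN (f : clform n) :
  provCL (COr (CBox (allN n) f) (CBox (allN n) (CNeg f))) ->
  provFI (Neg (FI (allN n) (embed f))).
Proof.
move=> /provFI_embed det.
apply: provFI_taut2 det (FI_Def (allN n) (embed f)) _; decide_taut.
Qed.

Lemma FI_between C f g h : provFI (Imp f g) -> provFI (Imp g h) ->
  provFI (Imp (And (FI C f) (FI C h)) (FI C g)).
Proof.
move=> pfg pgh.
have ngnf : provFI (Imp (Neg g) (Neg f)) by apply: provFI_taut1 pfg _; decide_taut.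
have mono := provFI_and (Box_mono C pgh) (Box_mono C ngnf).
have defs := provFI_and (FI_Def C f) (FI_Def C g).
apply: provFI_taut3 mono defs (FI_Def C h) _; decide_taut.
Qed.

End CLFI.

Theorem mainTheorem16 (n : nat) :
  (forall (C : {set 'I_n}) (f : form n),
      provFI (Iff (FI C f) (FI C (Neg f)))) /\
  (forall (C D : {set 'I_n}) (f : form n), C \subset D ->
      provFI (Imp (FI D f) (FI C f))) /\
  (forall f : clform n,
      provCL (COr (CBox (allN n) f) (CBox (allN n) (CNeg f))) ->
      provFI (Neg (FI (allN n) (embed f)))) /\
  (forall (C : {set 'I_n}) (f g h : form n),
      provFI (Imp f g) -> provFI (Imp g h) ->
      provFI (Imp (And (FI C f) (FI C h)) (FI C g))).
Proof.
split; first exact: FI_NegE.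
split; first exact: FI_subset.
split; first exact: not_FI_allN.
exact: FI_between.
Qed.
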